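(* Let $\mathcal G$ be an MMPG arena. (i) Let $(\sigma,\gamma)$ be a well-behaved perfectly-incentivised strategy profile that is an incentive strategy profile; let $Q$ be the set of vertices occurring on $\pi_\sigma$, $S$ the set of vertices occurring infinitely often on $\pi_\sigma$, $p_e$ the limit frequency of each edge $e$ on $\pi_\sigma$, $p_v=\sum_{(v,w)\in E}p_{(v,w)}$ for $v\in V$, and $\gamma_p$ the constant incentive of follower $p$ along $\pi_\sigma$. Then $((p_v)_{v},(p_e)_{e},(\gamma_p)_{p})$ satisfies $\mathrm{LP}(Q,S)$. (ii) Conversely, let $(\sigma,\gamma)$ be any pair of a well-behaved strategy profile and an incentive profile, let $Q,S,p_e,p_v$ be defined from $\pi_\sigma$ as in (i), and suppose $((p_v),(p_e),(\gamma_p(\sigma))_p)$ satisfies $\mathrm{LP}(Q,S)$. Then the perfectly-incentivised strategy profile $(\sigma^*,\gamma^* )$ with $\pi_{\sigma^*}=\pi_\sigma$ and constant incentive $\gamma_p(\sigma)$ for each follower $p$ along the play is an incentive strategy profile.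
   Context: A multi-player mean-payoff game (MMPG) arena is a tuple $\mathcal G=(P,V,(V_p)_{p\in P},v_0,E,(r_p)_{p\in P})$ where $P$ is a finite set of players containing a distinguished leader $l\in P$ (the other players are called followers), $V$ is a finite set of vertices with initial vertex $v_0\in V$, $(V_p)_{p\in P}$ is a partition of $V$ (player $p$ owns $V_p$), $E\subseteq V\times V$ is an edge set such that every vertex has at least one successor, and $r_p:E\to\mathbb Q$ is the reward function of player $p$. A history is a finite sequence $h=v_0v_1\dots v_n$ starting at $v_0$ with $(v_i,v_{i+1})\in E$ for all $i<n$; $\mathsf{last}(h)=v_n$. A play is an infinite such sequence. A strategy of player $p$ is a function $\sigma_p$ assigning to every history $h$ with $\mathsf{last}(h)\in V_p$ a vertex $v$ with $(\mathsf{last}(h),v)\in E$. A strategy profile $\sigma=(\sigma_p)_{p\in P}$ determines a unique play $\pi_\sigma$. The raw payoff of player $p$ on a play $\pi=v_0v_1\dots$ is $r_p(\pi)=\liminf_{n\to\infty}\frac1n\sum_{i=0}^{n-1}r_p((v_i,v_{i+1}))$, and $r_p(\sigma):=r_p(\pi_\sigma)$. For a profile $\sigma$, a player $p$ and a strategy $\sigma'$ of $p$, $\sigma_{p,\sigma'}$ denotes the profile obtained from $\sigma$ by replacing $p$'s strategy with $\sigma'$. An incentive for a follower $p$ is a function $\gamma_p$ from histories to $\mathbb R_{\ge 0}$; its value on a play $\pi=v_0v_1\dots$ is $\gamma_p(\pi)=\liminf_{n\to\infty}\frac1n\sum_{i=1}^{n}\gamma_p(v_0\dots v_i)$, and $\gamma_p(\sigma):=\gamma_p(\pi_\sigma)$.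 An incentive profile is $\gamma=(\gamma_p)_{p\in P\setminus\{l\}}$. A pair $(\sigma,\gamma)$ is an incentive strategy profile (ISP) if for every follower $p$ and every strategy $\sigma'$ of $p$: $r_p(\sigma)+\gamma_p(\sigma)\ge r_p(\sigma_{p,\sigma'})+\gamma_p(\sigma_{p,\sigma'})$. For a follower $p$, $\mathcal G_p$ is the two-player zero-sum mean-payoff game on the graph $(V,E)$ from any start vertex, in which player $p$ controls $V_p$ and maximises the liminf-average of $r_p$, while a coalition of all other players (including the leader) controls $V\setminus V_p$ and minimises it. Such games are determined with optimal memoryless strategies for both sides; $\mathrm{val}_p(v)$ denotes the value of $\mathcal G_p$ from vertex $v$. Fix, for each follower $p$, optimal memoryless strategies of both sides in $\mathcal G_p$. Let $r_{\max}=\max_{p\in P,e\in E}r_p(e)$. A history $h$ is deviating for a profile $\sigma$ if it is not a prefix of $\pi_\sigma$; then $\mathsf{dev}(h,\sigma)$ denotes the owner of $v_i$ for the largest $i$ such that $v_0\dots v_i$ is a prefix of $h$ and $v_{i+1}\ne\sigma(v_0\dots v_i)$ (the most recent player to have deviated from $\sigma$). A perfectly-incentivised strategy profile (PSP) is a pair $(\sigma,\gamma)$ such that: (i) for every follower $p$, $\gamma_p$ is constant on the prefixes of $\pi_\sigma$ (this constant is also denoted $\gamma_p$); (ii) on every deviating history $h$ with $p=\mathsf{dev}(h,\sigma)$, $v=\mathsf{last}(h)$ owned by $p'$, the move $\sigma_{p'}(h)=v'$ is the move prescribed at $v$ by the fixed optimal memoryless strategy in $\mathcal G_p$ (of $p$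 if $p'=p$, of the coalition otherwise); (iii) on deviating histories incentives are $0$, except that if in (ii) $p'$ is a follower and $p'\ne p$, then $\gamma_{p'}(h\cdot v')=r_{\max}+1-r_{p'}((v,v'))$. A PSP is determined by its play and its constant incentives along the play. The limit frequency of an edge $e$ on a play $\pi=v_0v_1\dots$ is $\lim_{n\to\infty}\frac1n|\{i<n:(v_i,v_{i+1})=e\}|$ when this limit exists. A strategy profile $\sigma$ is well-behaved if every edge has a limit frequency on $\pi_\sigma$. For sets $S\subseteq Q\subseteq V$, the constraint system $\mathrm{LP}(Q,S)$ over real variables $p_v$ ($v\in V$), $p_e$ ($e\in E$), $\gamma_p$ ($p\in P\setminus\{l\}$) consists of: (1) $p_v=0$ for $v\notin S$ and $p_v\ge0$ for $v\in S$; (2) $p_e=0$ for $e\in E\setminus(S\times S)$ and $p_e\ge 0$ for $e\in E\cap(S\times S)$; (3) $\sum_{v\in V}p_v=1$; (4) $p_s=\sum_{(s,t)\in E}p_{(s,t)}$ for all $s\in S$ and $p_t=\sum_{(s,t)\in E}p_{(s,t)}$ for all $t\in S$; (5) $\gamma_p\ge 0$ and $\gamma_p+\sum_{e\in E}p_e r_p(e)\ge\max_{v\in Q}\mathrm{val}_p(v)$ for every follower $p$. Its objective is to maximise $\sum_{e\in E}p_e r_l(e)-\sum_{p\in P\setminus\{l\}}\gamma_p$. *)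

From HB Require Import structures.
From mathcomp Require Import all_boot.
From Stdlib Require Import Reals ClassicalEpsilon.
From Stdlib Require QArith Qreals.

Set Implicit Arguments.
Unset Strict Implicit.
Unset Printing Implicit Defensive.

Inductive ER := Fin (x : R) | PInf | MInf.

Definition ER_le (a b : ER) : Prop :=
  match a, b with
  | MInf, _ => True
  | _, PInf => True
  | Fin x, Fin y => (x <= y)%R
  | _, _ => False
  end.

(* (+oo) + (-oo) never occurs below; convention -oo. *)
Definition ER_add (a b : ER) : ER :=
  match a, b with
  | Fin x, Fin y => Fin (x + y)%R
  | MInf, _ | _, MInf => MInf
  | _, _ => PInf
  end.

Definition is_liminf (u : nat -> R) (l : R) : Prop :=
  forall eps : R, (0 < eps)%R ->
    (exists N, forall n, (N <= n)%N -> (l - eps < u n)%R) /\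
    (forall N, exists n, (N <= n)%N /\ (u n < l + eps)%R).

Definition tends_to_pinf (u : nat -> R) : Prop :=
  forall M : R, exists N, forall n, (N <= n)%N -> (M < u n)%R.

Definition liminf (u : nat -> R) : ER :=
  match excluded_middle_informative (exists l, is_liminf u l) with
  | left H => Fin (proj1_sig (constructive_indefinite_description _ H))
  | right _ =>
      match excluded_middle_informative (tends_to_pinf u) with
      | left _ => PInf
      | right _ => MInf
      end
  end.

Definition avg (u : nat -> R) (n : nat) : R := (sum_f_R0 u n / INR (S n))%R.

Record arena := Arena {
  Pl : finType;
  Vt : finType;
  leader : Pl;
  owner : Vt -> Pl;                    (* V_p = owner^-1 p : a partition of V *)
  init : Vt;
  Ed : rel Vt;
  Ed_total : forall v, exists w, Ed v w;
  rew : Pl -> Vt -> Vt -> QArith_base.Q          (* r_p((u,w)); only used on edges *)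
}.

Section Arena.
Variable A : arena.
Local Notation P := (Pl A).
Local Notation V := (Vt A).
Local Notation E := (@Ed A).
Local Notation own := (@owner A).
Local Notation v0 := (init A).
Local Notation r := (@rew A).

Definition follower (p : P) : Prop := p <> leader A.

(* A history s v1 ... vn starting at s is represented by the list [:: v1; ...; vn];
   it is a history iff path E s h.  Its last vertex is last s h. *)

Definition strategy_for (s : V) (C : P -> bool) (sigma : seq V -> V) : Prop :=
  forall h, path E s h -> C (own (last s h)) -> E (last s h) (sigma h).

Definition profile (sigma : seq V -> V) : Prop :=
  strategy_for v0 (fun _ => true) sigma.

Definition strategy_of (p : P) (sigma : seq V -> V) : Prop :=
  strategy_for v0 (fun q => q == p) sigma.

Fixpoint hist (s : V) (sigma : seq V -> V) (n : nat) : seq V :=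
  match n with
  | 0 => [::]
  | n'.+1 => let h := hist s sigma n' in rcons h (sigma h)
  end.

Definition play (s : V) (sigma : seq V -> V) (n : nat) : V := last s (hist s sigma n).

Definition deviate (sigma : seq V -> V) (p : P) (sigma' : seq V -> V) : seq V -> V :=
  fun h => if own (last v0 h) == p then sigma' h else sigma h.

Definition mean_payoff (p : P) (pi : nat -> V) : ER :=
  liminf (avg (fun i => Q2R (r p (pi i) (pi i.+1)))).

Definition raw_payoff (p : P) (sigma : seq V -> V) : ER := mean_payoff p (play v0 sigma).

Definition is_incentive (gamma : P -> seq V -> R) : Prop :=
  forall p h, follower p -> path E v0 h -> (0 <= gamma p h)%R.

Definition inc_value (gamma : P -> seq V -> R) (p : P) (sigma : seq V -> V) : ER :=
  liminf (avg (fun i => gamma p (hist v0 sigma i.+1))).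

Definition is_ISP (sigma : seq V -> V) (gamma : P -> seq V -> R) : Prop :=
  forall p, follower p -> forall sigma', strategy_of p sigma' ->
    ER_le (ER_add (raw_payoff p (deviate sigma p sigma'))
                  (inc_value gamma p (deviate sigma p sigma')))
          (ER_add (raw_payoff p sigma) (inc_value gamma p sigma)).

Definition combine (s : V) (p : P) (sp sc : seq V -> V) : seq V -> V :=
  fun h => if own (last s h) == p then sp h else sc h.

Definition optimal_G (p : P) (val : V -> R) (tmax tmin : V -> V) : Prop :=
  (forall v, own v = p -> E v (tmax v)) /\
  (forall v, own v <> p -> E v (tmin v)) /\
  forall s : V,
    (forall sc, strategy_for s (fun q => q != p) sc ->
       ER_le (Fin (val s))
             (mean_payoff p (play s (combine s p (fun h => tmax (last s h)) sc)))) /\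
    (forall sp, strategy_for s (fun q => q == p) sp ->
       ER_le (mean_payoff p (play s (combine s p sp (fun h => tmin (last s h)))))
             (Fin (val s))).

Definition r_max : R :=
  let l := [seq Q2R (r x.1 x.2.1 x.2.2) |
             x <- [seq x <- enum {: P * (V * V)} | E x.2.1 x.2.2]] in
  foldr Rmax (head 0%R l) l.

Definition deviating (sigma : seq V -> V) (h : seq V) : Prop :=
  ~ (exists n, h = hist v0 sigma n).

(* i is the largest index with v_{i+1} <> sigma(v0 ... vi)  (h = [:: v1; ...]) *)
Definition is_last_dev (sigma : seq V -> V) (h : seq V) (i : nat) : Prop :=
  (i < size h)%N /\ nth v0 h i <> sigma (take i h) /\
  forall j, (i < j)%N -> (j < size h)%N -> nth v0 h j = sigma (take j h).

Definition dev_player (sigma : seq V -> V) (h : seq V) (p : P) : Prop :=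
  exists i, is_last_dev sigma h i /\ own (last v0 (take i h)) = p.

Definition punish_case (sigma : seq V -> V) (h' : seq V) (q : P) (h : seq V) (p : P) : Prop :=
  h' = rcons h (sigma h) /\ path E v0 h /\ deviating sigma h /\
  dev_player sigma h p /\ follower p /\ own (last v0 h) = q /\ q <> p.

Definition is_PSP (tmax tmin : P -> V -> V)
    (sigma : seq V -> V) (gamma : P -> seq V -> R) : Prop :=
  profile sigma /\ is_incentive gamma /\
  (forall p, follower p -> exists c, forall n, gamma p (hist v0 sigma n) = c) /\
  (forall h, path E v0 h -> deviating sigma h ->
     forall p, follower p -> dev_player sigma h p ->
       sigma h = (if own (last v0 h) == p then tmax p (last v0 h)
                  else tmin p (last v0 h))) /\
  (forall h', path E v0 h' -> deviating sigma h' -> forall q, follower q ->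
     (forall h p, punish_case sigma h' q h p ->
        gamma q h' = (r_max + 1 - Q2R (r q (last v0 h) (sigma h)))%R) /\
     (~ (exists h p, punish_case sigma h' q h p) -> gamma q h' = 0%R)).

Definition freq (pi : nat -> V) (u w : V) (n : nat) : R :=
  (INR (count (fun i => (pi i == u) && (pi i.+1 == w)) (iota 0 n.+1)) / INR n.+1)%R.

Definition well_behaved (sigma : seq V -> V) : Prop :=
  forall u w, E u w -> exists f, Un_cv (freq (play v0 sigma) u w) f.

Definition occurs (pi : nat -> V) (v : V) : Prop := exists n, pi n = v.
Definition occurs_inf (pi : nat -> V) (v : V) : Prop :=
  forall N, exists n, (N <= n)%N /\ pi n = v.

Definition vertex_weight (pe : V -> V -> R) (v : V) : R :=
  \big[Rplus/0%R]_(w : V | E v w) pe v w.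

(* ((pv),(pe),(g)) satisfies the constraints of LP(Q,S); pe u w is the
   variable p_(u,w) for edges (u,w) in E; g p the variable gamma_p *)
Definition sat_LP (val : P -> V -> R) (Qs Ss : V -> Prop)
    (pv : V -> R) (pe : V -> V -> R) (g : P -> R) : Prop :=
  (forall v, (~ Ss v -> pv v = 0%R) /\ (Ss v -> (0 <= pv v)%R)) /\
  (forall u w, E u w ->
     (~ (Ss u /\ Ss w) -> pe u w = 0%R) /\ (Ss u /\ Ss w -> (0 <= pe u w)%R)) /\
  \big[Rplus/0%R]_(v : V) pv v = 1%R /\
  (forall s, Ss s -> pv s = \big[Rplus/0%R]_(t : V | E s t) pe s t) /\
  (forall t, Ss t -> pv t = \big[Rplus/0%R]_(s : V | E s t) pe s t) /\
  (forall p, follower p ->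
     (0 <= g p)%R /\
     forall v, Qs v ->
       (val p v <= g p + \big[Rplus/0%R]_(x : V * V | E x.1 x.2)
                            (pe x.1 x.2 * Q2R (r p x.1 x.2)))%R).

End Arena.

From HB Require Import structures.
From mathcomp Require Import all_boot.
From Stdlib Require Import Reals.
From Stdlib Require QArith Qreals.
From Stdlib Require Import Lra FunctionalExtensionality Classical ClassicalEpsilon.

(* (i) Along the play the average of [r_p] up to step [n] is the sum over the
   edges of their frequencies up to [n] times their rewards, so the mean payoff is
   sum_e p_e r_p(e).  The limit frequencies are nonnegative, vanish on edges not
   taken infinitely often, sum to one, and conserve flow at every vertex because
   departures from and arrivals at a vertex among the first steps differ by at most
   one.  For constraint (5), let follower [p] switch to its optimal strategy of
   G_p at a vertex [v] of the play: it secures val_p(v), and the PSP pays it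
   nothing once it has deviated, so the ISP inequality yields
   val_p(v) <= sum_e p_e r_p(e) + gamma_p.
   (ii) If [p] deviates from the PSP, first at a vertex [u] of the play, the
   coalition then plays its optimal strategy of G_p and [p] is paid nothing, so [p]
   gets at most val_p(u) <= gamma_p + sum_e p_e r_p(e), its reward for complying. *)

Set Implicit Arguments.
Unset Strict Implicit.
Unset Printing Implicit Defensive.

Lemma Rplus_assoc_law : associative Rplus.
Proof. by move=> x y z; rewrite Rplus_assoc. Qed.

HB.instance Definition _ :=
  Monoid.isComLaw.Build R 0%R Rplus Rplus_assoc_law Rplus_comm Rplus_0_l.
HB.instance Definition _ := Monoid.isMulLaw.Build R 0%R Rmult Rmult_0_l Rmult_0_r.
HB.instance Definition _ :=
  Monoid.isAddLaw.Build R Rmult Rplus Rmult_plus_distr_r Rmult_plus_distr_l.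

Lemma INR_succ_gt0 n : (0 < INR n.+1)%R.
Proof. exact/lt_0_INR/ltP. Qed.

Lemma Rabs_div_succ x n : (Rabs (x / INR n.+1) = Rabs x / INR n.+1)%R.
Proof.
rewrite /Rdiv Rabs_mult Rabs_inv (Rabs_right (INR n.+1)) //.
by apply: Rle_ge; apply: Rlt_le; exact: INR_succ_gt0.
Qed.

Lemma Un_cv_const c : Un_cv (fun _ => c) c.
Proof. by move=> eps eps_gt0; exists 0%nat => n _; rewrite /R_dist Rminus_diag Rabs_R0. Qed.

Lemma Un_cv_O_div_succ (x : nat -> R) (C : R) (N : nat) :
  (forall n : nat, (N <= n)%N -> (Rabs (x n) <= C / INR n.+1)%R) -> Un_cv x 0.
Proof.
move=> x_le eps eps_gt0; have [K K_eps] := INR_archimed eps C eps_gt0.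
exists (maxn N K) => n /ssrnat.leP le_n; rewrite /R_dist Rminus_0_r.
apply: Rle_lt_trans (x_le n (leq_trans (leq_maxl _ _) le_n)) _.
have n_gt0 := INR_succ_gt0 n.
have : (INR K <= INR n.+1)%R.
  by apply/le_INR/leP; apply: leq_trans (leq_maxr _ _) (leqW le_n).
move=> le_K; apply/(Rmult_lt_reg_r (INR n.+1)) => //.
rewrite /Rdiv Rmult_assoc Rinv_l; nra.
Qed.

Lemma is_liminf_unique u l1 l2 : is_liminf u l1 -> is_liminf u l2 -> l1 = l2.
Proof.
have lt_liminf a b : is_liminf u a -> is_liminf u b -> ~ (a < b)%R.
  move=> Ha Hb lt_ab; have eps_gt0 : (0 < (b - a) / 2)%R by lra.
  have [[N HN] _] := Hb _ eps_gt0; have [n [le_Nn ua]] := (Ha _ eps_gt0).2 N.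
  by have := HN n le_Nn; lra.
by move=> H1 H2; have := lt_liminf _ _ H1 H2; have := lt_liminf _ _ H2 H1; lra.
Qed.

Lemma is_liminf_liminf u l : is_liminf u l -> liminf u = Fin l.
Proof.
move=> ul; rewrite /liminf; case: excluded_middle_informative => [ex|[]]; last by exists l.
by case: constructive_indefinite_description => l' ul' /=; rewrite (is_liminf_unique ul' ul).
Qed.

Lemma Un_cv_is_liminf u l : Un_cv u l -> is_liminf u l.
Proof.
move=> ul eps eps_gt0; have [N HN] := ul eps eps_gt0.
have close n : (N <= n)%N -> (l - eps < u n < l + eps)%R.
  by move=> /ssrnat.leP /HN /Rabs_def2; lra.
split; first by exists N => n /close; lra.
by move=> M; exists (maxn M N); split; [exact: leq_maxl | have := close _ (leq_maxr M N); lra].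
Qed.

Lemma is_liminf_succ u l : is_liminf (fun n => u n.+1) l <-> is_liminf u l.
Proof.
split=> ul eps eps_gt0; have [[N HN] Hinf] := ul eps eps_gt0; split.
- by exists N.+1 => -[|n] //= /HN.
- by move=> M; have [n [le_Mn un]] := Hinf M; exists n.+1; split => //; exact: leqW.
- by exists N => n le_Nn; apply: HN; exact: leqW.
- by move=> M; have [[|n] [le_Mn un]] := Hinf M.+1; last exists n.
Qed.

Lemma is_liminf_asymp u v l :
  Un_cv (fun n => u n - v n)%R 0 -> is_liminf u l <-> is_liminf v l.
Proof.
have asymp (x y : nat -> R) :
    (forall eps, (0 < eps)%R ->
       exists N, forall n, (N <= n)%N -> (Rabs (x n - y n) < eps)%R) ->
    is_liminf x l -> is_liminf y l.
  move=> xy xl eps eps_gt0; have eps2_gt0 : (0 < eps / 2)%R by lra.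
  have [[N1 HN1] Hinf] := xl _ eps2_gt0; have [N2 HN2] := xy _ eps2_gt0.
  split.
    exists (maxn N1 N2) => n le_n; have := HN1 n (leq_trans (leq_maxl _ _) le_n).
    by have /Rabs_def2 := HN2 n (leq_trans (leq_maxr _ _) le_n); lra.
  move=> M; have [n [le_n xn]] := Hinf (maxn M N2); exists n.
  split; first exact: leq_trans (leq_maxl _ _) le_n.
  by have /Rabs_def2 := HN2 n (leq_trans (leq_maxr _ _) le_n); lra.
move=> uv; have close eps : (0 < eps)%R ->
    exists N, forall n, (N <= n)%N -> (Rabs (u n - v n) < eps)%R.
  move=> /uv [N HN]; exists N => n /ssrnat.leP /HN.
  by rewrite /R_dist Rminus_0_r.
split; apply: asymp => // eps /close [N HN].
by exists N => n /HN; rewrite Rabs_minus_sym.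
Qed.

Lemma bounded_not_tends_to_pinf u B :
  (forall n, Rabs (u n) <= B)%R -> ~ tends_to_pinf u.
Proof.
move=> Bu upu; have [N HN] := upu B.
by have := HN N (leqnn N); have := Bu N; have := Rle_abs (u N); lra.
Qed.

Lemma liminf_bounded_ext u v B :
  (forall n, Rabs (u n) <= B)%R -> (forall n, Rabs (v n) <= B)%R ->
  (forall l, is_liminf u l <-> is_liminf v l) -> liminf u = liminf v.
Proof.
move=> Bu Bv uv.
case: (classic (exists l, is_liminf u l)) => [[l ul]|no_u].
  by rewrite (is_liminf_liminf ul) (is_liminf_liminf ((uv l).1 ul)).
have no_v : ~ exists l, is_liminf v l by case=> l /uv ul; apply: no_u; exists l.
rewrite /liminf.
case: (excluded_middle_informative (exists l, is_liminf u l)) => [ex_u|_]; first by case: no_u.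
case: (excluded_middle_informative (exists l, is_liminf v l)) => [ex_v|_]; first by case: no_v.
have [not_pinf_u not_pinf_v] := (bounded_not_tends_to_pinf Bu, bounded_not_tends_to_pinf Bv).
case: (excluded_middle_informative (tends_to_pinf u)) => [pinf_u|_]; first by case: not_pinf_u.
by case: (excluded_middle_informative (tends_to_pinf v)) => [pinf_v|_]; first by case: not_pinf_v.
Qed.

Lemma avg_const u c : (forall i, u i = c) -> forall n, avg u n = c.
Proof.
move=> uc n; have n_gt0 := INR_succ_gt0 n; rewrite /avg.
have -> : sum_f_R0 u n = (c * INR n.+1)%R.
  elim: n {n_gt0} => [|n IH]; first by rewrite /= uc; lra.
  by rewrite tech5 IH uc (S_INR n.+1); lra.
by field; lra.
Qed.

Lemma liminf_avg_const u c : (forall i, u i = c) -> liminf (avg u) = Fin c.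
Proof.
move=> uc; apply/is_liminf_liminf/Un_cv_is_liminf.
by apply: (Un_cv_ext (fun _ => c)) => [n|]; [rewrite (avg_const uc) | exact: Un_cv_const].
Qed.

Lemma Rabs_avg_le u B : (forall i, Rabs (u i) <= B)%R -> forall n, (Rabs (avg u n) <= B)%R.
Proof.
move=> Bu n; have n_gt0 := INR_succ_gt0 n.
have sum_le : (Rabs (sum_f_R0 u n) <= B * INR n.+1)%R.
  elim: n {n_gt0} => [|n IH]; first by have := Bu 0%nat; rewrite /=; lra.
  rewrite tech5 (S_INR n.+1); apply: Rle_trans (Rabs_triang _ _) _.
  by have := Bu n.+1; lra.
rewrite /avg Rabs_div_succ; apply/(Rmult_le_reg_r (INR n.+1)) => //.
by rewrite /Rdiv Rmult_assoc Rinv_l; lra.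
Qed.

Lemma liminf_avg_eventually0 u N :
  (forall i, (N <= i)%N -> u i = 0%R) -> liminf (avg u) = Fin 0.
Proof.
move=> u0; apply/is_liminf_liminf/Un_cv_is_liminf.
apply: (@Un_cv_O_div_succ _ (Rabs (sum_f_R0 u N)) N) => n le_Nn.
rewrite /avg Rabs_div_succ; apply: Req_le; congr (Rabs _ / _)%R.
elim: n le_Nn => [|n IH]; first by rewrite leqn0 => /eqP ->.
rewrite leq_eqVlt ltnS => /orP[/eqP <- //|le_Nn].
by rewrite tech5 u0 ?IH ?Rplus_0_r //; exact: leqW.
Qed.

Lemma avg_succ u n :
  (avg u n.+1 - avg (fun i => u i.+1) n = (u 0%nat - avg (fun i => u i.+1) n) / INR n.+2)%R.
Proof.
have sum_succ m : sum_f_R0 u m.+1 = (u 0%nat + sum_f_R0 (fun i => u i.+1) m)%R.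
  by elim: m => [|m IH] //; rewrite tech5 IH tech5; lra.
have n_gt0 := INR_succ_gt0 n.
by rewrite /avg sum_succ (S_INR n.+1); field; lra.
Qed.

Lemma liminf_avg_succ u B :
  (forall i, Rabs (u i) <= B)%R -> liminf (avg u) = liminf (avg (fun i => u i.+1)).
Proof.
move=> Bu; have Bus i : (Rabs (u i.+1) <= B)%R by [].
have B_ge0 : (0 <= B)%R by have := Bu 0%nat; have := Rabs_pos (u 0%nat); lra.
apply: (liminf_bounded_ext (Rabs_avg_le Bu) (Rabs_avg_le Bus)) => l.
have cv0 : Un_cv (fun n => avg u n.+1 - avg (fun i => u i.+1) n)%R 0.
  apply: (@Un_cv_O_div_succ _ (2 * B) 0) => n _; rewrite avg_succ Rabs_div_succ.
  have num_le : (Rabs (u 0%nat - avg (fun i => u i.+1) n) <= 2 * B)%R.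
    apply: Rle_trans (Rabs_triang _ _) _; rewrite Rabs_Ropp.
    by have := Bu 0%nat; have := Rabs_avg_le Bus n; lra.
  have := INR_succ_gt0 n; rewrite (S_INR n.+1) => n_gt0.
  apply: (@Rle_trans _ (2 * B / (INR n.+1 + 1))).
    by apply: Rmult_le_compat_r => //; left; apply: Rinv_0_lt_compat; lra.
  by apply: Rmult_le_compat_l; [lra | apply: Rinv_le_contravar; lra].
by rewrite -is_liminf_succ; apply: is_liminf_asymp.
Qed.

Lemma liminf_avg_shift u B m :
  (forall i, Rabs (u i) <= B)%R -> liminf (avg u) = liminf (avg (fun i => u (i + m)%N)).
Proof.
move=> Bu; elim: m => [|m ->].
  by congr (liminf (avg _)); apply: functional_extensionality => i; rewrite addn0.
rewrite (@liminf_avg_succ _ B) //.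
by congr (liminf (avg _)); apply: functional_extensionality => i; rewrite addSnnS.
Qed.

Lemma Rle_0_big (I : Type) (s : seq I) (P : pred I) (F : I -> R) :
  (forall i, P i -> 0 <= F i)%R -> (0 <= \big[Rplus/0%R]_(i <- s | P i) F i)%R.
Proof. by move=> F_ge0; apply: big_ind => [|x y|//]; lra. Qed.

Lemma big_Rmult_r (I : Type) (s : seq I) (P : pred I) (F : I -> R) c :
  (\big[Rplus/0%R]_(i <- s | P i) F i * c = \big[Rplus/0%R]_(i <- s | P i) (F i * c))%R.
Proof. exact: big_distrl. Qed.

Lemma Un_cv_big (I : Type) (s : seq I) (P : pred I) (F : I -> nat -> R) (L : I -> R) :
  (forall i, P i -> Un_cv (F i) (L i)) ->
  Un_cv (fun n => \big[Rplus/0%R]_(i <- s | P i) F i n) (\big[Rplus/0%R]_(i <- s | P i) L i).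
Proof.
move=> FL; elim: s => [|i s IH].
  rewrite big_nil; apply: (Un_cv_ext (fun _ => 0%R)); last exact: Un_cv_const.
  by move=> n; rewrite big_nil.
rewrite big_cons; case: ifP => Pi.
  apply: (Un_cv_ext (fun n => F i n + \big[Rplus/0%R]_(j <- s | P j) F j n)%R).
    by move=> n; rewrite big_cons Pi.
  by apply: CV_plus => //; apply: FL.
by apply: (Un_cv_ext _ _ _ _ IH) => n; rewrite big_cons Pi.
Qed.

Lemma big_count_1 (I : Type) (s : seq I) (c : pred I) :
  \big[Rplus/0%R]_(i <- s | c i) 1%R = INR (count c s).
Proof.
elim: s => [|i s IH]; first by rewrite big_nil.
by rewrite big_cons /= plus_INR -IH; case: (c i) => /=; lra.
Qed.

Lemma big_count_fibres (T : finType) (I : Type) (P : pred T) (a : I -> T) (c : pred I)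
    (s : seq I) (f : T -> R) :
  (forall i, c i -> P (a i)) ->
  \big[Rplus/0%R]_(x | P x) (INR (count (fun i => c i && (a i == x)) s) * f x)%R
  = \big[Rplus/0%R]_(i <- s | c i) f (a i).
Proof.
move=> Pa; elim: s => [|i s IH].
  by rewrite big_nil big1 // => x _; rewrite /= Rmult_0_l.
rewrite big_cons -IH.
under eq_bigr => x _ do rewrite /= plus_INR Rmult_plus_distr_r.
rewrite big_split /=; case: ifP => ci /=; last first.
  by rewrite big1 ?Rplus_0_l // => x _; rewrite Rmult_0_l.
congr (_ + _)%R; rewrite (bigD1 (a i)) ?Pa //= eqxx Rmult_1_l big1 ?Rplus_0_r // => x /andP[_ ne_x].
by rewrite eq_sym (negbTE ne_x) Rmult_0_l.
Qed.

Lemma sum_f_R0_iota u n : sum_f_R0 u n = \big[Rplus/0%R]_(i <- iota 0 n.+1) u i.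
Proof.
elim: n => [|n IH]; first by rewrite /= big_cons big_nil Rplus_0_r.
by rewrite tech5 IH -(addn1 n.+1) iotaD big_cat /= big_seq1.
Qed.

Lemma INR_div_succ_ge0 c n : (0 <= INR c / INR n.+1)%R.
Proof.
apply: Rmult_le_pos; first exact: pos_INR.
exact/Rlt_le/Rinv_0_lt_compat/INR_succ_gt0.
Qed.

Lemma Un_cv_count_bounded (a : pred nat) N :
  (forall i, a i -> (i < N)%N) -> Un_cv (fun n => INR (count a (iota 0 n.+1)) / INR n.+1)%R 0.
Proof.
move=> a_lt; apply: (@Un_cv_O_div_succ _ (INR N) 0) => n _.
rewrite Rabs_right; last exact/Rle_ge/INR_div_succ_ge0.
apply: Rmult_le_compat_r; first exact/Rlt_le/Rinv_0_lt_compat/INR_succ_gt0.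
apply/le_INR/leP; rewrite -size_filter -(size_iota 0 N).
apply: uniq_leq_size; first by rewrite filter_uniq ?iota_uniq.
by move=> i; rewrite mem_filter !mem_iota add0n => /andP[/a_lt ->].
Qed.

Section Plays.
Variable A : arena.
Local Notation V := (Vt A).
Local Notation E := (@Ed A).

Lemma size_hist s (t : seq V -> V) n : size (hist s t n) = n.
Proof. by elim: n => //= n IH; rewrite size_rcons IH. Qed.

Lemma play_succ s (t : seq V -> V) n : play s t n.+1 = t (hist s t n).
Proof. by rewrite /play /= last_rcons. Qed.

Lemma take_hist s (t : seq V -> V) n k : (k <= n)%N -> take k (hist s t n) = hist s t k.
Proof.
elim: n => [|n IH]; first by rewrite leqn0 => /eqP ->.
rewrite leq_eqVlt ltnS => /orP[/eqP ->|le_kn]; first by rewrite take_oversize ?size_hist.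
by rewrite /= -cats1 takel_cat ?size_hist // IH.
Qed.

Lemma nth_hist s (t : seq V -> V) n k x : (k < n)%N -> nth x (hist s t n) k = t (hist s t k).
Proof.
move=> lt_kn; rewrite -(nth_take x (ltnSn k)) take_hist //=.
by rewrite nth_rcons size_hist ltnn eqxx.
Qed.

Lemma path_hist s (t : seq V -> V) n :
  strategy_for s (fun _ => true) t -> path E s (hist s t n).
Proof.
move=> st; elim: n => [|n IH] //=.
by rewrite rcons_path IH /=; apply: st.
Qed.

Lemma edge_play s (t : seq V -> V) n :
  strategy_for s (fun _ => true) t -> E (play s t n) (play s t n.+1).
Proof. by move=> st; rewrite play_succ /play; apply: (st) => //; exact: path_hist. Qed.

Lemma hist_eq s (t1 t2 : seq V -> V) n :
  (forall k, (k < n)%N -> t1 (hist s t1 k) = t2 (hist s t1 k)) ->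
  hist s t1 n = hist s t2 n.
Proof.
elim: n => [//|n IH] t12 /=.
have IHn : hist s t1 n = hist s t2 n by apply: IH => k /ltnW; exact: t12.
by rewrite -IHn t12.
Qed.

Lemma play_eq s (t1 t2 : seq V -> V) :
  (forall k, t1 (hist s t1 k) = t2 (hist s t1 k)) -> play s t1 = play s t2.
Proof.
by move=> t12; apply: functional_extensionality => n; rewrite /play (@hist_eq _ _ t2).
Qed.

Definition residual (t : seq V -> V) (h : seq V) : seq V -> V := fun h' => t (h ++ h').

Lemma hist_residual s (t : seq V -> V) m k :
  hist s t (m + k) = hist s t m ++ hist (play s t m) (residual t (hist s t m)) k.
Proof. by elim: k => [|k IH]; rewrite ?addn0 ?cats0 // addnS /= IH rcons_cat. Qed.

Lemma play_residual s (t : seq V -> V) m k :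
  play (play s t m) (residual t (hist s t m)) k = play s t (m + k).
Proof. by rewrite /play hist_residual last_cat. Qed.

Lemma residual_hist s (t : seq V -> V) m k :
  residual t (hist s t m) (hist (play s t m) (residual t (hist s t m)) k) = t (hist s t (m + k)).
Proof. by rewrite /residual hist_residual. Qed.

Lemma strategy_residual s (t : seq V -> V) m (C : pred (Pl A)) :
  strategy_for s (fun _ => true) t ->
  strategy_for (play s t m) C (residual t (hist s t m)).
Proof.
move=> st h path_h _; rewrite /residual.
have -> : last (play s t m) h = last s (hist s t m ++ h) by rewrite last_cat.
by apply: (st) => //; rewrite cat_path path_hist.
Qed.

End Plays.

Section Divergence.
Variable A : arena.
Local Notation V := (Vt A).
Local Notation P := (Pl A).
Local Notation own := (@owner A).
Local Notation v0 := (init A).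

Lemma is_last_dev_unique (s : seq V -> V) h i j :
  is_last_dev s h i -> is_last_dev s h j -> i = j.
Proof.
move=> [lt_i [ne_i after_i]] [lt_j [ne_j after_j]].
case: (ltngtP i j) => // [lt_ij|lt_ji]; first by case: ne_j; apply: after_i.
by case: ne_i; apply: after_j.
Qed.

Lemma dev_player_unique (s : seq V -> V) h p1 p2 :
  dev_player s h p1 -> dev_player s h p2 -> p1 = p2.
Proof.
by move=> [i [Hi <-]] [j [Hj <-]]; rewrite (is_last_dev_unique Hi Hj).
Qed.

Variables (s t : seq V -> V) (p : P).
Hypothesis t_off_p : forall h, own (last v0 h) != p -> t h = s h.

Definition diverges (k : nat) : bool := t (hist v0 t k) != s (hist v0 t k).

Lemma diverges_owner k : diverges k -> own (play v0 t k) = p.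
Proof. by move=> div_k; apply/eqP; apply: contraNT div_k => /t_off_p ->; rewrite eqxx. Qed.

Lemma deviating_after_divergence m k :
  diverges m -> (m < k)%N -> deviating s (hist v0 t k).
Proof.
move=> div_m lt_mk [j hist_tk]; move: div_m; rewrite /diverges.
have jk : j = k by rewrite -(size_hist v0 s j) -hist_tk size_hist.
subst j.
have agree : hist v0 t m = hist v0 s m.
  by rewrite -(take_hist v0 t (ltnW lt_mk)) hist_tk take_hist // ltnW.
by rewrite -(nth_hist v0 t v0 lt_mk) hist_tk nth_hist // agree eqxx.
Qed.

Lemma dev_player_after_divergence m k :
  diverges m -> (m < k)%N -> dev_player s (hist v0 t k) p.
Proof.
move=> div_m lt_mk.
have ex_div : exists i, (i < k) && diverges i by exists m; rewrite lt_mk.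
have ub i : (i < k) && diverges i -> (i <= k)%N by case/andP => /ltnW.
case: (ex_maxnP ex_div ub) => i /andP[lt_ik div_i] max_i.
exists i; split; last by rewrite (take_hist v0 t (ltnW lt_ik)); exact: diverges_owner.
split; first by rewrite size_hist.
split; first by rewrite nth_hist // (take_hist v0 t (ltnW lt_ik)); apply/eqP.
move=> j lt_ij; rewrite size_hist => lt_jk.
rewrite nth_hist // (take_hist v0 t (ltnW lt_jk)).
case: (boolP (diverges j)) => [div_j|]; last by rewrite negbK => /eqP.
by have := max_i j; rewrite lt_jk div_j leqNgt lt_ij => /(_ isT).
Qed.

Definition deviation_point (m : nat) : Prop :=
  [/\ hist v0 t m = hist v0 s m, own (play v0 t m) = p &
      forall k, (m < k)%N -> deviating s (hist v0 t k) /\ dev_player s (hist v0 t k) p].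

Lemma divergence_cases :
  (forall n, hist v0 t n = hist v0 s n) \/ exists m, deviation_point m.
Proof.
have agree k : ~~ diverges k -> t (hist v0 t k) = s (hist v0 t k) by rewrite negbK => /eqP.
case: (classic (exists k, diverges k)) => [ex_div|no_div]; last first.
  left=> n; apply: hist_eq => k _; apply: agree.
  by apply/negP => div_k; apply: no_div; exists k.
case: (ex_minnP ex_div) => m div_m min_m; right; exists m; split.
- apply: hist_eq => k lt_km; apply: agree; apply/negP => /min_m.
  by rewrite leqNgt lt_km.
- exact: diverges_owner.
- move=> k lt_mk; split; first exact: deviating_after_divergence div_m lt_mk.
  exact: dev_player_after_divergence div_m lt_mk.
Qed.

End Divergence.

Section PerfectlyIncentivised.
Variable A : arena.
Local Notation V := (Vt A).
Local Notation P := (Pl A).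
Local Notation own := (@owner A).
Local Notation v0 := (init A).

Variables (tmax tmin : P -> V -> V) (s : seq V -> V) (gamma : P -> seq V -> R).
Hypothesis PSP_s : is_PSP tmax tmin s gamma.
Variables (t : seq V -> V) (p : P) (m : nat).
Hypotheses (follower_p : follower p) (profile_t : profile t).
Hypothesis deviation_m : deviation_point s t p m.

(* After [p]'s own deviation, [p] is always the last deviator,
   and the PSP never pays the deviator. *)
Lemma PSP_incentive_after_deviation k : (m < k)%N -> gamma p (hist v0 t k) = 0%R.
Proof.
case: deviation_m => hist_m _ after_m; case: k => [//|k] lt_mk.
have [_ [_ [_ [_ incentives]]]] := PSP_s.
have [dev_k _] := after_m _ lt_mk.
apply: (incentives _ (path_hist _ profile_t) dev_k p follower_p).2.
move=> -[h [p' [/= /rcons_inj[<- _] [_ [dev_h [dev_p' [_ [_ ne_pp']]]]]]]].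
move: lt_mk; rewrite ltnS leq_eqVlt => /orP[/eqP eq_mk|lt_mk].
  by apply: dev_h; exists m; rewrite -eq_mk.
by apply: ne_pp'; apply: dev_player_unique (after_m _ lt_mk).2 dev_p'.
Qed.

Lemma PSP_inc_value_after_deviation : inc_value gamma p t = Fin 0.
Proof.
apply: (@liminf_avg_eventually0 _ m) => i le_mi.
by apply: PSP_incentive_after_deviation; rewrite ltnS.
Qed.

Hypothesis t_off_p : forall h, own (last v0 h) != p -> t h = s h.

Lemma PSP_punishes_after_deviation k :
  (m <= k)%N -> own (play v0 t k) != p -> t (hist v0 t k) = tmin p (play v0 t k).
Proof.
case: deviation_m => _ own_m after_m.
rewrite leq_eqVlt => /orP[/eqP <-|lt_mk] own_k; first by rewrite own_m eqxx in own_k.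
have [dev_k dev_p] := after_m _ lt_mk; have [_ [_ [_ [punish _]]]] := PSP_s.
rewrite t_off_p //.
by rewrite (punish _ (path_hist _ profile_t) dev_k p follower_p dev_p) (negbTE own_k).
Qed.

End PerfectlyIncentivised.

Section MeanPayoff.
Variable A : arena.
Local Notation V := (Vt A).
Local Notation P := (Pl A).
Local Notation E := (@Ed A).
Local Notation own := (@owner A).
Local Notation v0 := (init A).
Local Notation r := (@rew A).

Lemma mean_payoff_shift p (pi : nat -> V) m :
  mean_payoff p pi = mean_payoff p (fun k => pi (k + m)%N).
Proof.
pose B := \big[Rplus/0%R]_(x : P * (V * V)) Rabs (Q2R (r x.1 x.2.1 x.2.2)).
have B_ge i : (Rabs (Q2R (r p (pi i) (pi i.+1))) <= B)%R.
  rewrite /B (bigD1 (p, (pi i, pi i.+1))) //=.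
  rewrite -[X in (X <= _)%R]Rplus_0_r; apply: Rplus_le_compat_l.
  by apply: Rle_0_big => x _; exact: Rabs_pos.
rewrite /mean_payoff (liminf_avg_shift m B_ge).
by congr (liminf (avg _)); apply: functional_extensionality => i; rewrite addSn.
Qed.

Lemma raw_payoff_residual p (t : seq V -> V) m :
  raw_payoff p t = mean_payoff p (play (play v0 t m) (residual t (hist v0 t m))).
Proof.
rewrite /raw_payoff (mean_payoff_shift p _ m); congr (mean_payoff p _).
by apply: functional_extensionality => k; rewrite play_residual addnC.
Qed.

(* The average reward up to step [n] is the sum of the edge rewards weighted by
   their frequencies up to [n]. *)
Lemma raw_payoff_freq (t : seq V -> V) (pe : V -> V -> R) p :
  profile t -> (forall u w, E u w -> Un_cv (freq (play v0 t) u w) (pe u w)) ->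
  raw_payoff p t = Fin (\big[Rplus/0%R]_(x : V * V | E x.1 x.2)
                          (pe x.1 x.2 * Q2R (r p x.1 x.2)))%R.
Proof.
move=> profile_t cv_pe; apply/is_liminf_liminf/Un_cv_is_liminf.
set pi := play v0 t.
apply: (Un_cv_ext (fun n => \big[Rplus/0%R]_(x : V * V | E x.1 x.2)
                            (freq pi x.1 x.2 n * Q2R (r p x.1 x.2)))%R); last first.
  by apply: Un_cv_big => x Ex; apply: CV_mult; [exact: cv_pe | exact: Un_cv_const].
move=> n; rewrite /avg sum_f_R0_iota /Rdiv.
rewrite -(@big_count_fibres _ _ (fun x => E x.1 x.2) (fun i => (pi i, pi i.+1))
            (fun _ => true) _ (fun x => Q2R (r p x.1 x.2))); last first.
  by move=> i _; exact: edge_play _ profile_t.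
rewrite big_Rmult_r; apply: eq_bigr => -[u w] _; cbn [fst snd].
rewrite /freq /Rdiv (@eq_count _ _ (fun i => (pi i == u) && (pi i.+1 == w))); first by lra.
by move=> i; rewrite /= xpair_eqE.
Qed.

Section ZeroSumValue.
Variables (p : P) (val : V -> R) (vmax vmin : V -> V).
Hypothesis optimal : optimal_G p val vmax vmin.
Variables (t : seq V -> V) (m : nat).
Hypothesis profile_t : profile t.

Lemma val_le_raw_payoff :
  (forall k, own (play v0 t (m + k)) = p ->
     t (hist v0 t (m + k)) = vmax (play v0 t (m + k))) ->
  ER_le (Fin (val (play v0 t m))) (raw_payoff p t).
Proof.
move=> follows_vmax; have [_ [_ opt]] := optimal.
set u := play v0 t m; set t' := residual t (hist v0 t m).
rewrite (raw_payoff_residual p t m) -/u -/t'.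
rewrite (@play_eq _ u t' (combine u p (fun h => vmax (last u h)) t')).
  exact: (opt _).1 (strategy_residual profile_t).
move=> k; rewrite /combine; case: ifP => // /eqP.
rewrite -/(play _ _ k) play_residual /t' /u residual_hist; exact: follows_vmax.
Qed.

Lemma raw_payoff_le_val :
  (forall k, own (play v0 t (m + k)) != p ->
     t (hist v0 t (m + k)) = vmin (play v0 t (m + k))) ->
  ER_le (raw_payoff p t) (Fin (val (play v0 t m))).
Proof.
move=> follows_vmin; have [_ [_ opt]] := optimal.
set u := play v0 t m; set t' := residual t (hist v0 t m).
rewrite (raw_payoff_residual p t m) -/u -/t'.
rewrite (@play_eq _ u t' (combine u p t' (fun h => vmin (last u h)))).
  exact: (opt _).2 (strategy_residual profile_t).
move=> k; rewrite /combine; case: ifP => // /negbT.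
rewrite -/(play _ _ k) play_residual /t' /u residual_hist; exact: follows_vmin.
Qed.

End ZeroSumValue.

End MeanPayoff.

Section Frequencies.
Variable A : arena.
Local Notation V := (Vt A).
Local Notation P := (Pl A).
Local Notation E := (@Ed A).
Local Notation r := (@rew A).

Variable pi : nat -> V.
Hypothesis edge_pi : forall i, E (pi i) (pi i.+1).
Variable pe : V -> V -> R.
Hypothesis cv_pe : forall u w, E u w -> Un_cv (freq pi u w) (pe u w).

Lemma freq_lim_ge0 u w : E u w -> (0 <= pe u w)%R.
Proof.
move=> Euw; apply: (Rle_cv_lim _ (Un_cv_const 0) (cv_pe Euw)) => n.
exact: INR_div_succ_ge0.
Qed.

Lemma not_occurs_inf_bound v : ~ occurs_inf pi v -> exists N, forall i, pi i = v -> (i < N)%N.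
Proof.
move=> /not_all_ex_not [N not_after]; exists N => i pi_v; rewrite ltnNge.
by apply/negP => le_Ni; apply: not_after; exists i.
Qed.

Lemma freq_lim_eq0 u w :
  E u w -> ~ (occurs_inf pi u /\ occurs_inf pi w) -> pe u w = 0%R.
Proof.
move=> Euw not_inf; apply: (UL_sequence _ _ _ (cv_pe Euw)).
have [N bound] : exists N, forall i, (pi i == u) && (pi i.+1 == w) -> (i < N)%N.
  case: (classic (occurs_inf pi u)) => [inf_u|/not_occurs_inf_bound [N bound]].
    have [|N bound] := @not_occurs_inf_bound w; first by move=> inf_w; apply: not_inf.
    by exists N => i /andP[_ /eqP /bound /ltnW].
  by exists N => i /andP[/eqP /bound].
exact: Un_cv_count_bounded bound.
Qed.

Lemma freq_out_sum v n :
  \big[Rplus/0%R]_(w | E v w) freq pi v w n =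
  (INR (count (fun i => pi i == v) (iota 0 n.+1)) / INR n.+1)%R.
Proof.
rewrite /freq /Rdiv -big_Rmult_r -big_count_1.
rewrite -(@big_count_fibres _ _ (E v) (fun i => pi i.+1) (fun i => pi i == v) _ (fun _ => 1%R));
  last by move=> i /eqP <-.
by congr (_ * _)%R; apply: eq_bigr => w _; rewrite Rmult_1_r.
Qed.

Lemma freq_in_sum v n :
  \big[Rplus/0%R]_(u | E u v) freq pi u v n =
  (INR (count (fun i => pi i.+1 == v) (iota 0 n.+1)) / INR n.+1)%R.
Proof.
rewrite /freq /Rdiv -big_Rmult_r -big_count_1.
rewrite -(@big_count_fibres _ _ (fun u => E u v) pi (fun i => pi i.+1 == v) _ (fun _ => 1%R));
  last by move=> i /eqP <-.
congr (_ * _)%R; apply: eq_bigr => u _; rewrite Rmult_1_r.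
by congr INR; apply: eq_count => i; rewrite andbC.
Qed.

Lemma count_visits_arrivals v n :
  (Rabs (INR (count (fun i => pi i == v) (iota 0 n.+1)) -
         INR (count (fun i => pi i.+1 == v) (iota 0 n.+1))) <= 1)%R.
Proof.
have count_succ (a : pred nat) m k : count (fun i => a i.+1) (iota m k) = count a (iota m.+1 k).
  by elim: k m => [//|k IH] m /=; rewrite IH.
have visits : count (fun i => pi i == v) (iota 0 n.+1) =
              ((pi 0%N == v) + count (fun i => pi i == v) (iota 1 n))%N by [].
have arrivals : count (fun i => pi i.+1 == v) (iota 0 n.+1) =
                (count (fun i => pi i == v) (iota 1 n) + (pi n.+1 == v))%N.
  by rewrite (count_succ (fun i => pi i == v)) -(addn1 n) iotaD count_cat /= addn0 add1n addn1.
rewrite visits arrivals !plus_INR.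
by case: (pi 0%N == v); case: (pi n.+1 == v); apply: Rabs_le; simpl INR; lra.
Qed.

Lemma Un_cv_freq_out v :
  Un_cv (fun n => \big[Rplus/0%R]_(w | E v w) freq pi v w n) (vertex_weight pe v).
Proof. by apply: Un_cv_big => w; exact: cv_pe. Qed.

Lemma vertex_weight_inflow v : vertex_weight pe v = \big[Rplus/0%R]_(u | E u v) pe u v.
Proof.
have cv_in : Un_cv (fun n => \big[Rplus/0%R]_(u | E u v) freq pi u v n)
                   (\big[Rplus/0%R]_(u | E u v) pe u v).
  by apply: Un_cv_big => u; exact: cv_pe.
have cv_diff := CV_minus _ _ _ _ (Un_cv_freq_out v) cv_in.
suff cv0 : Un_cv (fun n => \big[Rplus/0%R]_(w | E v w) freq pi v w n -
                           \big[Rplus/0%R]_(u | E u v) freq pi u v n)%R 0.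
  by have := UL_sequence _ _ _ cv_diff cv0; lra.
apply: (@Un_cv_O_div_succ _ 1 0) => n _.
rewrite freq_out_sum freq_in_sum -Rdiv_minus_distr Rabs_div_succ.
apply: Rmult_le_compat_r; last exact: count_visits_arrivals.
exact/Rlt_le/Rinv_0_lt_compat/INR_succ_gt0.
Qed.

Lemma vertex_weight_sum1 : \big[Rplus/0%R]_(v : V) vertex_weight pe v = 1%R.
Proof.
apply: (UL_sequence _ _ _
          (@Un_cv_big _ (index_enum V) (fun _ => true) _ _ (fun v _ => Un_cv_freq_out v))).
apply: (Un_cv_ext (fun _ => 1%R)); last exact: Un_cv_const.
move=> n; under eq_bigr do rewrite freq_out_sum.
rewrite -big_Rmult_r.
have -> : \big[Rplus/0%R]_(v : V) INR (count (fun i => pi i == v) (iota 0 n.+1)) = INR n.+1.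
  have := @big_count_fibres _ _ predT pi predT (iota 0 n.+1) (fun _ => 1%R) (fun _ _ => isT).
  rewrite big_count_1 count_predT size_iota => <-.
  by apply: eq_bigr => w _; rewrite Rmult_1_r.
by rewrite Rinv_r //; apply: not_0_INR.
Qed.

Lemma sat_LP_freq (val : P -> V -> R) (g : P -> R) :
  (forall p, follower p ->
     (0 <= g p)%R /\
     forall v, occurs pi v ->
       (val p v <= g p + \big[Rplus/0%R]_(x : V * V | E x.1 x.2)
                            (pe x.1 x.2 * Q2R (r p x.1 x.2)))%R) ->
  sat_LP val (occurs pi) (occurs_inf pi) (vertex_weight pe) pe g.
Proof.
move=> incentive_constraints.
split.
  move=> v; split => [fin_v|inf_v].
    by rewrite /vertex_weight big1 // => w Evw; apply: freq_lim_eq0 => // -[].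
  by apply: Rle_0_big => w; exact: freq_lim_ge0.
split.
  by move=> u w Euw; split => [|_]; [exact: freq_lim_eq0 | exact: freq_lim_ge0].
split; first exact: vertex_weight_sum1.
split; first by [].
by split; last exact: incentive_constraints; move=> v _; exact: vertex_weight_inflow.
Qed.

End Frequencies.

Section IncentiveStrategyProfiles.
Variable A : arena.
Local Notation V := (Vt A).
Local Notation P := (Pl A).
Local Notation E := (@Ed A).
Local Notation own := (@owner A).
Local Notation v0 := (init A).
Local Notation r := (@rew A).

Lemma ER_le_refl x : ER_le x x.
Proof. by case: x => //= x; exact: Rle_refl. Qed.

Lemma inc_value_const (gamma : P -> seq V -> R) p (s : seq V -> V) c :
  (forall n, gamma p (hist v0 s n) = c) -> inc_value gamma p s = Fin c.
Proof. by move=> gamma_c; apply: liminf_avg_const => i; exact: gamma_c. Qed.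

Lemma deviate_profile (s s2 : seq V -> V) p :
  profile s -> strategy_of p s2 -> profile (deviate s p s2).
Proof.
move=> profile_s s2_p h path_h _; rewrite /deviate.
by case: eqP => [own_p|_]; [apply: s2_p => //; exact/eqP | exact: profile_s].
Qed.

Lemma deviate_off (s s2 : seq V -> V) p h :
  own (last v0 h) != p -> deviate s p s2 h = s h.
Proof. by rewrite /deviate => /negbTE ->. Qed.

Lemma payoffs_hist_eq (gamma : P -> seq V -> R) p (s t : seq V -> V) :
  (forall n, hist v0 t n = hist v0 s n) ->
  raw_payoff p t = raw_payoff p s /\ inc_value gamma p t = inc_value gamma p s.
Proof.
move=> hist_ts; have play_ts : play v0 t = play v0 s.
  by apply: functional_extensionality => n; rewrite /play hist_ts.
rewrite /raw_payoff /inc_value play_ts; split => //.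
by congr (liminf (avg _)); apply: functional_extensionality => i; rewrite hist_ts.
Qed.

Variables (val : P -> V -> R) (tmax tmin : P -> V -> V).

Lemma PSP_ISP_incentive_constraint (s : seq V -> V) gamma (pe : V -> V -> R) g p v :
  optimal_G p (val p) (tmax p) (tmin p) -> is_PSP tmax tmin s gamma -> is_ISP s gamma ->
  (forall u w, E u w -> Un_cv (freq (play v0 s) u w) (pe u w)) ->
  (forall n, gamma p (hist v0 s n) = g p) -> follower p -> occurs (play v0 s) v ->
  (val p v <= g p + \big[Rplus/0%R]_(x : V * V | E x.1 x.2)
                       (pe x.1 x.2 * Q2R (r p x.1 x.2)))%R.
Proof.
move=> optimal PSP_s ISP_s cv_pe gamma_g follower_p [n play_n].
have [profile_s [incentive_gamma _]] := PSP_s.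
have g_ge0 : (0 <= g p)%R by rewrite -(gamma_g 0%N); exact: incentive_gamma.
(* [p] switches to its optimal strategy of [G_p] once the play has reached [v]. *)
pose s2 h := if (n <= size h)%N then tmax p (last v0 h) else s h.
have s2_p : strategy_of p s2.
  move=> h path_h /eqP own_p; rewrite /s2; case: ifP => _; last exact: profile_s.
  by case: optimal => tmax_edge _; apply: tmax_edge.
pose t := deviate s p s2.
have profile_t : profile t by exact: deviate_profile.
have hist_n : hist v0 t n = hist v0 s n.
  apply: hist_eq => k lt_kn; rewrite /t /deviate /s2 size_hist leqNgt lt_kn.
  by case: ifP.
have val_le : ER_le (Fin (val p v)) (raw_payoff p t).
  rewrite -play_n /play -hist_n -/(play v0 t n).
  apply: (val_le_raw_payoff optimal profile_t) => k own_k.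
  by rewrite /t /deviate own_k eqxx /s2 size_hist leq_addr.
have := ISP_s p follower_p s2 s2_p; rewrite -/t (raw_payoff_freq _ profile_s cv_pe).
rewrite (inc_value_const gamma_g).
case: (divergence_cases (@deviate_off s s2 p)) => [same|[m deviation_m]].
  move=> _; have [raw_ts _] := payoffs_hist_eq gamma p same.
  by move: val_le; rewrite raw_ts (raw_payoff_freq _ profile_s cv_pe) /=; lra.
rewrite (PSP_inc_value_after_deviation PSP_s follower_p profile_t deviation_m).
by move: val_le; case: (raw_payoff p t) => //= x; lra.
Qed.

Lemma sat_LP_PSP_is_ISP (s : seq V -> V) (pe : V -> V -> R) g :
  (forall p, follower p -> optimal_G p (val p) (tmax p) (tmin p)) ->
  profile s -> (forall u w, E u w -> Un_cv (freq (play v0 s) u w) (pe u w)) ->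
  sat_LP val (occurs (play v0 s)) (occurs_inf (play v0 s)) (vertex_weight pe) pe g ->
  forall (s' : seq V -> V) (gamma' : P -> seq V -> R),
    is_PSP tmax tmin s' gamma' -> (forall n, play v0 s' n = play v0 s n) ->
    (forall p, follower p -> forall n, gamma' p (hist v0 s' n) = g p) ->
    is_ISP s' gamma'.
Proof.
move=> optimal profile_s cv_pe [_ [_ [_ [_ [_ LP_incentives]]]]].
move=> s' gamma' PSP_s' same_play gamma'_g p follower_p s2 s2_p.
have profile_s' : profile s' by case: PSP_s'.
pose t := deviate s' p s2.
have profile_t : profile t by exact: deviate_profile.
case: (divergence_cases (@deviate_off s' s2 p)) => [same|[m deviation_m]].
  by have [-> ->] := payoffs_hist_eq gamma' p same; exact: ER_le_refl.
rewrite (PSP_inc_value_after_deviation PSP_s' follower_p profile_t deviation_m).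
rewrite (inc_value_const (gamma'_g p follower_p)).
have -> : raw_payoff p s' = raw_payoff p s.
  by rewrite /raw_payoff (functional_extensionality _ _ same_play).
rewrite (raw_payoff_freq _ profile_s cv_pe).
have le_val : ER_le (raw_payoff p t) (Fin (val p (play v0 t m))).
  apply: (raw_payoff_le_val (optimal p follower_p) profile_t) => k own_k.
  apply: (PSP_punishes_after_deviation PSP_s' follower_p profile_t deviation_m) => //.
    exact: deviate_off.
  exact: leq_addr.
have occurs_m : occurs (play v0 s) (play v0 t m).
  by case: deviation_m => hist_m _ _; exists m; rewrite -same_play /play hist_m.
have := (LP_incentives p follower_p).2 _ occurs_m.
by move: le_val; case: (raw_payoff p t) => //= x; lra.
Qed.

End IncentiveStrategyProfiles.

Theorem corollary1 (A : arena) (val : Pl A -> Vt A -> R)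
    (tmax tmin : Pl A -> Vt A -> Vt A)
    (Hopt : forall p, follower p -> optimal_G p (val p) (tmax p) (tmin p)) :
  (* (i) *)
  (forall (sigma : seq (Vt A) -> Vt A) (gamma : Pl A -> seq (Vt A) -> R),
     is_PSP tmax tmin sigma gamma -> is_ISP sigma gamma -> well_behaved sigma ->
     forall (pe : Vt A -> Vt A -> R) (g : Pl A -> R),
       (forall u w, @Ed A u w -> Un_cv (freq (play (init A) sigma) u w) (pe u w)) ->
       (forall p, follower p -> forall n, gamma p (hist (init A) sigma n) = g p) ->
       sat_LP val (occurs (play (init A) sigma)) (occurs_inf (play (init A) sigma))
              (vertex_weight pe) pe g)
  /\
  (* (ii) *)
  (forall (sigma : seq (Vt A) -> Vt A) (gamma : Pl A -> seq (Vt A) -> R),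
     profile sigma -> is_incentive gamma -> well_behaved sigma ->
     forall (pe : Vt A -> Vt A -> R) (g : Pl A -> R),
       (forall u w, @Ed A u w -> Un_cv (freq (play (init A) sigma) u w) (pe u w)) ->
       (forall p, follower p -> inc_value gamma p sigma = Fin (g p)) ->
       sat_LP val (occurs (play (init A) sigma)) (occurs_inf (play (init A) sigma))
              (vertex_weight pe) pe g ->
       forall (sigma' : seq (Vt A) -> Vt A) (gamma' : Pl A -> seq (Vt A) -> R),
         is_PSP tmax tmin sigma' gamma' ->
         (forall n, play (init A) sigma' n = play (init A) sigma n) ->
         (forall p, follower p -> forall n, gamma' p (hist (init A) sigma' n) = g p) ->
         is_ISP sigma' gamma').
Proof.
split=> [sigma gamma PSP_sigma ISP_sigma _ pe g cv_pe gamma_g|]; last first.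
  move=> sigma gamma profile_sigma _ _ pe g cv_pe _ LP_sigma.
  exact: sat_LP_PSP_is_ISP Hopt profile_sigma cv_pe LP_sigma.
  have [profile_sigma [incentive_gamma _]] := PSP_sigma.
  apply: sat_LP_freq => [i|//|p follower_p]; first exact: edge_play.
  split; first by rewrite -(gamma_g p follower_p 0%N); exact: incentive_gamma.
  move=> v; exact: (PSP_ISP_incentive_constraint (Hopt p follower_p) PSP_sigma ISP_sigma cv_pe
                                                 (gamma_g p follower_p) follower_p).
Qed.
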